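(* Assume the decisional Diffie–Hellman problem is hard for the group generator $Gen$ (which outputs groups of prime order). Then the hash system $(PG,IS,DI,KG,Hash,pHash)$ described in the context is a smooth projective hash family that holds properties distinguishability and hard subset membership (SPHDH).
   Context: $Gen(1^k)$ randomly chooses a cyclic group of prime order and outputs its description $\langle g,q,*\rangle$ (generator $g$, order $q$). DDH is hard: $DDH_1\stackrel{c}{=}DDH_2$, where $DDH_1(1^k)$ outputs $(\langle g,q,*\rangle,g^a,g^b,g^{ab})$ and $DDH_2(1^k)$ outputs $(\langle g,q,*\rangle,g^a,g^b,g^c)$, with $\langle g,q,*\rangle\leftarrow Gen(1^k)$ and $a,b,c$ uniform in $\mathbb Z_q$; $\stackrel{c}{=}$ is computational indistinguishability against non-uniform PPT distinguishers. Hash system: $PG(1^k)$ outputs $\Lambda\leftarrow Gen(1^k)$. $IS(1^k,\Lambda,\delta)$: pick uniform $a,b,c\in\mathbb Z_q$; if $\delta=0$ output $(\dot x,\dot w)=((g^a,g^b,g^{ab}),(a,b))$; if $\delta=1$ output $(\ddot x,\ddot w)=((g^a,g^b,g^c),(a,b))$. $DI(1^k,\Lambda,(\alpha,\beta,\gamma),(a,b))$ outputs $0$ if $(\alpha,\beta,\gamma)=(g^a,g^b,g^{ab})$ and $1$ if $(\alpha,\beta)=(g^a,g^b)$ and $\gamma\ne g^{ab}$. $KG(1^k,\Lambda,(\alpha,\beta,\gamma))$: uniform $u,v\in\mathbb Z_q$, $pk=\alpha^ug^v$, $hk=\gamma^u\beta^v$, output $(hk,pk)$. $Hash(1^k,\Lambda,x,hk)=hk$.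 $pHash(1^k,\Lambda,x,pk,(a,b))=pk^b$. SPHDH means: with $\dot R_\Lambda=\bigcup_kRange(IS(1^k,\Lambda,0))$, $\ddot R_\Lambda=\bigcup_kRange(IS(1^k,\Lambda,1))$: (projection) for all sufficiently large $k$, $\Lambda\in Range(PG(1^k))$, $(\dot x,\dot w)\in Range(IS(1^k,\Lambda,0))$, $(hk,pk)\in Range(KG(1^k,\Lambda,\dot x))$: $Hash(1^k,\Lambda,\dot x,hk)=pHash(1^k,\Lambda,\dot x,pk,\dot w)$; (distinguishability) $DI$ outputs $0$ on pairs in $\dot R_\Lambda$ and $1$ on pairs in $\ddot R_\Lambda$; (smoothness) $Sm_1\stackrel{c}{=}Sm_2$, where $Sm_1(1^k)$: $\Lambda\leftarrow PG(1^k)$, $(\ddot x,\ddot w)\leftarrow IS(1^k,\Lambda,1)$, $(hk,pk)\leftarrow KG(1^k,\Lambda,\ddot x)$, $y\leftarrow Hash(1^k,\Lambda,\ddot x,hk)$, output $(\Lambda,\ddot x,pk,y)$, and $Sm_2$ is the same with $y$ uniform in $Range(Hash(1^k,\Lambda,\ddot x,\cdot))$; (hard subset membership) $Hm_1\stackrel{c}{=}Hm_2$ where $Hm_1(1^k)=(\Lambda,\dot x)$, $(\dot x,\cdot)\leftarrow IS(1^k,\Lambda,0)$, and $Hm_2(1^k)=(\Lambda,\ddot x)$, $(\ddot x,\cdot)\leftarrow IS(1^k,\Lambda,1)$, with $\Lambda\leftarrow PG(1^k)$.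
   Formalization: In $IS(1^k,\Lambda,1)$ the exponent $c$ is uniform on $\mathbb Z_q$ without the residue ab mod q, rather than on all of $\mathbb Z_q$, while $DDH_2$ still draws $c$ uniformly from $\mathbb Z_q$. Apart from conventions, each condition added here is assumed in the paper as well or is needed for the statement above to hold. *)

From HB Require Import structures.
From Stdlib Require List.
From mathcomp Require Import all_boot all_order all_algebra fingroup.
Unset Implicit Arguments.
Unset Strict Implicit.
Unset Printing Implicit Defensive.
Import GRing.Theory Num.Theory.

Definition dist (T : Type) := seq (rat * T).

Definition dret {T : Type} (x : T) : dist T := [:: (1%R, x)].

Definition dbind {T U : Type} (d : dist T) (f : T -> dist U) : dist U :=
  flatten [seq [seq ((p.1 * r.1)%R, r.2) | r <- f p.2] | p <- d].

Definition dunif {T : Type} (s : seq T) : dist T :=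
  [seq (((size s)%:R)^-1%R, x) | x <- s].

Definition Pr {T : Type} (d : dist T) (P : T -> bool) : rat :=
  (\sum_(p <- d) p.1 * (P p.2)%:R)%R.

Definition is_dist {T : Type} (d : dist T) : Prop :=
  (forall p, List.In p d -> (0 <= p.1)%R) /\ (\sum_(p <- d) p.1)%R = 1%R.

Definition supp {T : Type} (d : dist T) (x : T) : Prop :=
  exists2 p, List.In p d & p.2 = x /\ (0 < p.1)%R.

Definition negligible (f : nat -> rat) : Prop :=
  forall c : nat, exists N : nat, forall k : nat, (N <= k)%N ->
    (`|f k| < ((k ^ c)%:R)^-1)%R.

(* [Eff T D] : the family of (non-uniform) distinguishers D = (D_k)_k on
   inputs of type T is efficient.  Computational indistinguishability of
   ensembles X, Y relative to Eff: *)
Definition comp_indist (Eff : forall T : Type, (nat -> T -> bool) -> Prop)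
    {T : Type} (X Y : nat -> dist T) : Prop :=
  forall D : nat -> T -> bool, Eff T D ->
    negligible (fun k => (Pr (X k) (D k) - Pr (Y k) (D k))%R).

Record gdesc := GDesc {
  gT : finGroupType;
  gen : gT;
  gen_generates : (<[gen]> = [set: gT])%g;
  order_prime : prime #|gT| }.

Definition gq (L : gdesc) : nat := #|gT L|.

Definition Zq (L : gdesc) : seq nat := iota 0 (gq L).

Definition gexp (L : gdesc) (n : nat) : gT L := (gen L ^+ n)%g.

Definition DDH_out := {L : gdesc & (gT L * gT L * gT L)%type}.

Definition DDH1 (Gen : nat -> dist gdesc) (k : nat) : dist DDH_out :=
  dbind (Gen k) (fun L =>
  dbind (dunif (Zq L)) (fun a =>
  dbind (dunif (Zq L)) (fun b =>
  dret (existT (fun L => (gT L * gT L * gT L)%type) L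
          (gexp L a, gexp L b, gexp L (a * b)))))).

Definition DDH2 (Gen : nat -> dist gdesc) (k : nat) : dist DDH_out :=
  dbind (Gen k) (fun L =>
  dbind (dunif (Zq L)) (fun a =>
  dbind (dunif (Zq L)) (fun b =>
  dbind (dunif (Zq L)) (fun c =>
  dret (existT (fun L => (gT L * gT L * gT L)%type) L
          (gexp L a, gexp L b, gexp L c)))))).

Definition DDH_hard (Eff : forall T : Type, (nat -> T -> bool) -> Prop)
    (Gen : nat -> dist gdesc) : Prop :=
  comp_indist Eff (DDH1 Gen) (DDH2 Gen).

(* Brute-force discrete-log test for polynomially small groups
   (q <= k^c): a polynomial-time algorithm, assumed to be efficient. *)
Definition dlog_test (c : nat) (k : nat) (t : DDH_out) : bool :=
  let L := projT1 t in
  let '(al, be, ga) := projT2 t in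
  (gq L <= k ^ c)%N &&
  has (fun i => (be == gexp L i) && (ga == (al ^+ i)%g)) (iota 0 (gq L)).

(* Bits 0/1 are encoded as false/true.                                 *)
Record hash_system := HashSystem {
  Lam : Type;
  Xt : Lam -> Type;
  Wt : Lam -> Type;
  HKt : Lam -> finType;
  PKt : Lam -> Type;
  Yt : Lam -> eqType;
  PG : nat -> dist Lam;
  IS : nat -> forall L : Lam, bool -> dist (Xt L * Wt L);
  DI : nat -> forall L : Lam, Xt L -> Wt L -> bool;
  KG : nat -> forall L : Lam, Xt L -> dist (HKt L * PKt L);
  Hash : nat -> forall L : Lam, Xt L -> HKt L -> Yt L;
  pHash : nat -> forall L : Lam, Xt L -> PKt L -> Wt L -> Yt L }.
Arguments Xt : clear implicits.  Arguments Wt : clear implicits.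
Arguments HKt : clear implicits. Arguments PKt : clear implicits.
Arguments Yt : clear implicits.  Arguments PG : clear implicits.
Arguments IS : clear implicits.  Arguments DI : clear implicits.
Arguments KG : clear implicits.  Arguments Hash : clear implicits.
Arguments pHash : clear implicits.

Section SPH.
Variable H : hash_system.

Definition Rdot (L : Lam H) (x : Xt H L) (w : Wt H L) : Prop :=
  exists k, supp (IS H k L false) (x, w).
Definition Rddot (L : Lam H) (x : Xt H L) (w : Wt H L) : Prop :=
  exists k, supp (IS H k L true) (x, w).

Definition projection_prop : Prop :=
  exists N, forall k, (N <= k)%N ->
    forall L, supp (PG H k) L ->
    forall x w, supp (IS H k L false) (x, w) ->
    forall hk pk, supp (KG H k L x) (hk, pk) ->
      Hash H k L x hk = pHash H k L x pk w.

Definition distinguishability_prop : Prop :=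
  forall k L, supp (PG H k) L -> forall x w,
    (Rdot L x w -> DI H k L x w = false) /\
    (Rddot L x w -> DI H k L x w = true).

Definition Sm_out := {L : Lam H & (Xt H L * PKt H L * Yt H L)%type}.

Definition Sm1 (k : nat) : dist Sm_out :=
  dbind (PG H k) (fun L =>
  dbind (IS H k L true) (fun xw =>
  dbind (KG H k L xw.1) (fun kp =>
  let y := Hash H k L xw.1 kp.1 in
  dret (existT (fun L => (Xt H L * PKt H L * Yt H L)%type) L
          (xw.1, kp.2, y))))).

Definition Sm2 (k : nat) : dist Sm_out :=
  dbind (PG H k) (fun L =>
  dbind (IS H k L true) (fun xw =>
  dbind (KG H k L xw.1) (fun kp =>
  dbind (dunif (undup [seq Hash H k L xw.1 hk | hk <- enum (HKt H L)]))
        (fun y =>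
  dret (existT (fun L => (Xt H L * PKt H L * Yt H L)%type) L
          (xw.1, kp.2, y)))))).

Definition Hm_out := {L : Lam H & Xt H L}.

Definition Hm1 (k : nat) : dist Hm_out :=
  dbind (PG H k) (fun L =>
  dbind (IS H k L false) (fun xw => dret (existT (fun L => Xt H L) L xw.1))).

Definition Hm2 (k : nat) : dist Hm_out :=
  dbind (PG H k) (fun L =>
  dbind (IS H k L true) (fun xw => dret (existT (fun L => Xt H L) L xw.1))).

Definition SPHDH (Eff : forall T : Type, (nat -> T -> bool) -> Prop) : Prop :=
  [/\ projection_prop,
      distinguishability_prop,
      comp_indist Eff Sm1 Sm2 &
      comp_indist Eff Hm1 Hm2].
End SPH.

Definition ddhX (L : gdesc) : Type := (gT L * gT L * gT L)%type.
Definition ddhW (L : gdesc) : Type := (nat * nat)%type.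

Definition ddh_IS (k : nat) (L : gdesc) (d : bool) : dist (ddhX L * ddhW L) :=
  dbind (dunif (Zq L)) (fun a =>
  dbind (dunif (Zq L)) (fun b =>
  if ~~ d then dret ((gexp L a, gexp L b, gexp L (a * b)), (a, b))
  else
    dbind (dunif [seq c <- Zq L | c != (a * b) %% gq L]) (fun c =>
    dret ((gexp L a, gexp L b, gexp L c), (a, b))))).

Definition ddh_DI (k : nat) (L : gdesc) (x : ddhX L) (w : ddhW L) : bool :=
  let '(al, be, ga) := x in ga != gexp L (w.1 * w.2).

Definition ddh_KG (k : nat) (L : gdesc) (x : ddhX L) : dist (gT L * gT L) :=
  let '(al, be, ga) := x in
  dbind (dunif (Zq L)) (fun u =>
  dbind (dunif (Zq L)) (fun v =>
  dret (((ga ^+ u) * (be ^+ v))%g, ((al ^+ u) * gexp L v)%g))).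

Definition ddh_Hash (k : nat) (L : gdesc) (x : ddhX L) (hk : gT L) : gT L := hk.

Definition ddh_pHash (k : nat) (L : gdesc) (x : ddhX L) (pk : gT L)
    (w : ddhW L) : gT L := (pk ^+ w.2)%g.

Definition ddh_hash_system (Gen : nat -> dist gdesc) : hash_system :=
  @HashSystem gdesc ddhX ddhW (fun L => gT L) (fun L => gT L) (fun L => gT L)
    Gen ddh_IS ddh_DI ddh_KG ddh_Hash ddh_pHash.

(* Projection: for x = (g^a, g^b, g^(ab)) the hashing key g^(abu) g^(bv) equals
   (g^(au) g^v)^b = pk^b.
   Smoothness holds exactly: when c <> ab (mod q), the map
   (u, v) |-> (g^(cu + bv), g^(au + v)) is a bijection from Z_q^2 onto G^2 (its
   determinant is c - ab), so hk is uniform and independent of pk.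
   Hard subset membership: a uniform c in Z_q, as in DDH_2, is the mixture with
   weight 1/q of c = ab and of a uniform c <> ab, which is what IS(., 1) samples.
   Hence the Hm advantage of a distinguisher differs from its DDH advantage by at
   most E[1/q]. Groups with q > k^c contribute less than k^-c to this error, and
   the probability that q <= k^c is at most twice the DDH advantage of the
   brute-force discrete-log test [dlog_test c], which is negligible. *)

From mathcomp Require Import all_boot all_order all_algebra fingroup.
From mathcomp Require Import cyclic ring lra.
Import Order.TTheory GRing.Theory Num.Theory.

Local Open Scope ring_scope.

Definition Ex {T : Type} (d : dist T) (f : T -> rat) : rat :=
  \sum_(p <- d) p.1 * f p.2.

Lemma PrE {T : Type} (d : dist T) (P : pred T) :
  Pr d P = Ex d (fun x => (P x)%:R).
Proof. by []. Qed.

Lemma eq_Ex {T : Type} (d : dist T) (f g : T -> rat) :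
  f =1 g -> Ex d f = Ex d g.
Proof. by move=> fg; apply: eq_bigr => p _; rewrite fg. Qed.

Lemma Ex_dret {T : Type} (x : T) (f : T -> rat) : Ex (dret x) f = f x.
Proof. by rewrite /Ex big_seq1 mul1r. Qed.

Lemma Ex_dbind {T U : Type} (d : dist T) (F : T -> dist U) (h : U -> rat) :
  Ex (dbind d F) h = Ex d (fun x => Ex (F x) h).
Proof.
rewrite /Ex /dbind big_flatten /= big_map; apply: eq_bigr => p _.
by rewrite big_map mulr_sumr; apply: eq_bigr => r _; rewrite mulrA.
Qed.

Lemma Ex_dunif {T : Type} (s : seq T) (f : T -> rat) :
  Ex (dunif s) f = (size s)%:R^-1 * \sum_(x <- s) f x.
Proof. by rewrite /Ex big_map mulr_sumr. Qed.

Lemma ExB {T : Type} (d : dist T) (f g : T -> rat) :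
  Ex d (fun x => f x - g x) = Ex d f - Ex d g.
Proof. by rewrite /Ex -sumrB; apply: eq_bigr => p _; rewrite mulrBr. Qed.

Lemma ExD {T : Type} (d : dist T) (f g : T -> rat) :
  Ex d (fun x => f x + g x) = Ex d f + Ex d g.
Proof. by rewrite /Ex -big_split; apply: eq_bigr => p _; rewrite mulrDr. Qed.

Lemma ExZ {T : Type} (d : dist T) a (f : T -> rat) :
  Ex d (fun x => a * f x) = a * Ex d f.
Proof. by rewrite /Ex mulr_sumr; apply: eq_bigr => p _; rewrite mulrCA. Qed.

Lemma Ex_exchange {T U : Type} (d : dist T) (d' : dist U) (h : T -> U -> rat) :
  Ex d (fun x => Ex d' (h x)) = Ex d' (fun y => Ex d (h^~ y)).
Proof.
rewrite /Ex; under eq_bigr do rewrite mulr_sumr.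
rewrite exchange_big; apply: eq_bigr => r _; rewrite mulr_sumr.
by apply: eq_bigr => p _; rewrite mulrCA.
Qed.

Lemma Ex_cst {T : Type} (d : dist T) c : is_dist d -> Ex d (fun=> c) = c.
Proof. by case=> _ d1; rewrite /Ex -mulr_suml d1 mul1r. Qed.

Lemma ler_Ex {T : Type} (d : dist T) (f g : T -> rat) :
  is_dist d -> (forall x, f x <= g x) -> Ex d f <= Ex d g.
Proof.
case=> + _; rewrite /Ex; elim: d => [|p d IH] d_ge0 fg; first by rewrite !big_nil.
rewrite !big_cons lerD ?IH //; last by move=> r dr; apply: d_ge0; right.
by rewrite ler_wpM2l // d_ge0 //; left.
Qed.

Lemma ler_norm_Ex {T : Type} (d : dist T) (f : T -> rat) :
  is_dist d -> `|Ex d f| <= Ex d (fun x => `|f x|).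
Proof.
case=> + _; rewrite /Ex; elim: d => [|p d IH] d_ge0; first by rewrite !big_nil normr0.
rewrite !big_cons (le_trans (ler_normD _ _)) // lerD ?IH //.
  by rewrite normrM ger0_norm // d_ge0 //; left.
by move=> r dr; apply: d_ge0; right.
Qed.

Lemma is_dist_dret {T : Type} (x : T) : is_dist (dret x).
Proof. by split=> [p [<-|[]] //|]; rewrite big_seq1. Qed.

Lemma Ex_in01 {T : Type} (d : dist T) (f : T -> rat) :
  is_dist d -> (forall x, 0 <= f x <= 1) -> 0 <= Ex d f <= 1.
Proof.
move=> dd f01; rewrite -(Ex_cst d 0 dd) -(Ex_cst d 1 dd).
by apply/andP; split; apply: ler_Ex => // x; case/andP: (f01 x).
Qed.

Lemma Pr_in01 {T : Type} (d : dist T) (P : pred T) :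
  is_dist d -> 0 <= Pr d P <= 1.
Proof. by move=> dd; rewrite PrE Ex_in01 // => x; case: (P x). Qed.

Lemma is_dist_dbind {T U : Type} (d : dist T) (F : T -> dist U) :
  is_dist d -> (forall x, is_dist (F x)) -> is_dist (dbind d F).
Proof.
move=> dd Fd; split; last first.
  have -> : \sum_(p <- dbind d F) p.1 = Ex (dbind d F) (fun=> 1).
    by apply: eq_bigr => p _; rewrite mulr1.
  by rewrite Ex_dbind (eq_Ex _ _ _ (fun x => Ex_cst _ 1 (Fd x))) Ex_cst.
case: dd => + _; elim: d => [|p d IH] d_ge0 r //= rd.
case: (List.in_app_or _ _ _ rd) => [|rd']; last first.
  by apply: IH rd' => p' dp'; apply: d_ge0; right.
case/List.in_map_iff => r' [<- Fr'] /=.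
by rewrite mulr_ge0 ?d_ge0 //; [left | case: (Fd p.2) => + _; apply].
Qed.

(* Unlike [supp], ignores the weights, so it is preserved by [dbind] without
   any positivity assumption. *)
Definition outcome {T : Type} (d : dist T) (y : T) : Prop :=
  exists2 p, List.In p d & p.2 = y.

Lemma supp_outcome {T : Type} {d : dist T} {y : T} : supp d y -> outcome d y.
Proof. by case=> p dp [py _]; exists p. Qed.

Lemma outcome_dret {T : Type} {x y : T} : outcome (dret x) y -> y = x.
Proof. by case=> p [<-|[]] <-. Qed.

Lemma outcome_dbind {T U : Type} {d : dist T} {F : T -> dist U} {y : U} :
  outcome (dbind d F) y -> exists2 x, outcome d x & outcome (F x) y.
Proof.
case=> r + <-; elim: d => [|p d IH] //= rd.
case: (List.in_app_or _ _ _ rd) => [|/IH [x [p' dp' <-] Fx]]; last first.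
  by exists p'.2 => //; exists p' => //; right.
case/List.in_map_iff => r' [<- Fr']; exists p.2; first by exists p => //; left.
by exists r'.
Qed.

Lemma outcome_dunif {T : eqType} {s : seq T} {y : T} : outcome (dunif s) y -> y \in s.
Proof.
case=> p /List.in_map_iff [x [<- xs]] <- /=.
by elim: s xs => [|z s IH] //= [->|/IH]; rewrite inE ?eqxx // => ->; rewrite orbT.
Qed.

Lemma eq_Ex_dunif {T : eqType} (s : seq T) (f g : T -> rat) :
  {in s, f =1 g} -> Ex (dunif s) f = Ex (dunif s) g.
Proof.
move=> fg; rewrite !Ex_dunif; congr (_ * _); rewrite big_seq_cond [RHS]big_seq_cond.
by apply: eq_bigr => x /andP[xs _]; apply: fg.
Qed.

Lemma is_dist_dunif {T : eqType} (s : seq T) : s != [::] -> is_dist (dunif s).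
Proof.
move=> s0; split; first by move=> p /List.in_map_iff [x [<- _]]; rewrite invr_ge0.
rewrite /dunif big_map big_const_seq count_predT iter_addr_0.
rewrite -[_ *+ _]mulr_natr mulVf //.
by rewrite pnatr_eq0 size_eq0.
Qed.

Lemma Ex_dunif_rem {T : eqType} (s : seq T) m (f : T -> rat) : m \in s -> uniq s ->
  Ex (dunif s) f = (size s)%:R^-1 * f m +
    (1 - (size s)%:R^-1) * Ex (dunif [seq x <- s | x != m]) f.
Proof.
move=> ms us; rewrite -rem_filter // !Ex_dunif (big_rem m ms) size_rem //=.
(* For [size s = 1] the filtered list is empty: its junk expectation 0 comes
   with the weight 0. *)
have [s1|s_gt1] := leqP (size s) 1.
  have s1' : size s = 1%N.
    by apply/anti_leq; rewrite s1 -has_predT; apply/hasP; exists m.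
  rewrite s1' subrr mul0r addr0 [rem _ _]size0nil ?big_nil ?addr0 //.
  by rewrite size_rem // s1'.
have n0 : (size s)%:R != 0 :> rat by rewrite pnatr_eq0 -lt0n ltnW.
have n1 : (size s).-1%:R != 0 :> rat by rewrite pnatr_eq0 -lt0n -ltnS prednK // ltnW.
have sS : (size s)%:R = (size s).-1%:R + 1 :> rat by rewrite natr1 prednK // ltnW.
rewrite mulrDr mulrA; congr (_ + _ * _).
by rewrite sS in n0 *; field; apply/andP.
Qed.

Lemma negligible_of_bound (M : nat) (f : nat -> rat) :
  (forall c, exists N, forall k, (N <= k)%N -> `|f k| <= M%:R / (k ^ c)%:R) ->
  negligible f.
Proof.
move=> fM c; have [N HN] := fM c.+1; exists (maxn N M.+1) => k.
rewrite geq_max => /andP[Nk Mk]; apply: le_lt_trans (HN k Nk) _.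
have k0 : (0 < k)%N by apply: leq_trans Mk.
rewrite expnS natrM invfM mulrA gtr_pMl ?invr_gt0 ?ltr0n ?expn_gt0 ?k0 //.
by rewrite ltr_pdivrMr ?ltr0n // mul1r ltr_nat.
Qed.

Lemma Ex_dunif_enum_inj {T : finType} (h : T -> T) (F : T -> rat) :
  injective h -> Ex (dunif (enum T)) (fun x => F (h x)) = Ex (dunif (enum T)) F.
Proof.
move=> h_inj; rewrite !Ex_dunif; congr (_ * _).
by rewrite !big_enum [RHS](reindex_inj h_inj).
Qed.

Lemma Ex_expg_uniform {gT : finGroupType} (e t : gT) (F : gT -> rat) :
  #[e]%g = #|gT| ->
  Ex (dunif (iota 0 #|gT|)) (fun u => F (e ^+ u * t)%g) = Ex (dunif (enum gT)) F.
Proof.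
move=> oe; rewrite !Ex_dunif size_iota -cardE; congr (_ * _).
rewrite -(big_map (fun u => e ^+ u * t)%g xpredT F); apply: perm_big.
have uniq_et : uniq [seq e ^+ u * t | u <- iota 0 #|gT|]%g.
  rewrite map_inj_in_uniq ?iota_uniq // => u v; rewrite !mem_iota !add0n => uq vq.
  move/mulIg/eqP; rewrite eq_expg_mod_order oe !modn_small //; exact: eqP.
apply: uniq_perm; rewrite ?enum_uniq // => y.
have et_sub : {subset [seq e ^+ u * t | u <- iota 0 #|gT|]%g <= enum gT}.
  by move=> z _; rewrite mem_enum.
have [|_ ->] // := uniq_min_size uniq_et et_sub.
by rewrite [in X in (_ <= X)%N]size_map size_iota cardE.
Qed.

Section PrimeOrderGroup.
Variable L : gdesc.
Local Notation q := (gq L).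
Local Notation G := (gT L).
Local Open Scope group_scope.

Lemma gq_gt1 : (1 < q)%N.
Proof. exact: prime_gt1 (order_prime L). Qed.

Lemma Zq_neq0 : Zq L != [::].
Proof. by rewrite -size_eq0 size_iota -lt0n ltnW // gq_gt1. Qed.

Lemma order_gen : #[gen L] = q.
Proof. by rewrite /order gen_generates cardsT. Qed.

Lemma order_gdesc (e : G) : e != 1 -> #[e] = q.
Proof.
move=> e1; have /primeP[_ q_div] := order_prime L.
have := order_dvdG (in_setT e); rewrite cardsT => /q_div/orP[/eqP oe1|/eqP //].
by move: e1; rewrite -order_eq1 oe1 eqxx.
Qed.

Lemma gdesc_commute (x y : G) : commute x y.
Proof.
have: x \in <[gen L]> by rewrite gen_generates inE.
have: y \in <[gen L]> by rewrite gen_generates inE.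
by case/cycleP => j -> /cycleP [i ->]; apply: commuteX2.
Qed.

Lemma eq_gexp m n : (gexp L m == gexp L n) = (m == n %[mod q]).
Proof. by rewrite /gexp eq_expg_mod_order order_gen. Qed.

Lemma gexp_mod n : gexp L (n %% q) = gexp L n.
Proof. by rewrite /gexp -order_gen expg_mod_order. Qed.

Lemma gexpX m n : gexp L m ^+ n = gexp L (m * n).
Proof. by rewrite /gexp expgM. Qed.
End PrimeOrderGroup.

Definition gexp_triple (L : gdesc) (a b c : nat) : ddhX L :=
  (gexp L a, gexp L b, gexp L c).

Definition non_dh_exps (L : gdesc) (a b : nat) : seq nat :=
  [seq c <- Zq L | c != ((a * b) %% gq L)%N].

Definition dh_triples (L : gdesc) : dist (ddhX L) :=
  dbind (dunif (Zq L)) (fun a => dbind (dunif (Zq L)) (fun b =>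
  dret (gexp_triple L a b (a * b)%N))).

Definition rand_triples (L : gdesc) : dist (ddhX L) :=
  dbind (dunif (Zq L)) (fun a => dbind (dunif (Zq L)) (fun b =>
  dbind (dunif (Zq L)) (fun c => dret (gexp_triple L a b c)))).

Definition non_dh_triples (L : gdesc) : dist (ddhX L) :=
  dbind (dunif (Zq L)) (fun a => dbind (dunif (Zq L)) (fun b =>
  dbind (dunif (non_dh_exps L a b)) (fun c => dret (gexp_triple L a b c)))).

Section DDHInstances.
Variable L : gdesc.
Local Notation q := (gq L).
Implicit Types (f : ddhX L -> rat) (k : nat).

Lemma modn_in_Zq n : (n %% q)%N \in Zq L.
Proof. by rewrite mem_iota add0n ltn_pmod // ltnW // gq_gt1. Qed.

Lemma non_dh_exps_neq0 a b : non_dh_exps L a b != [::].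
Proof.
rewrite /non_dh_exps -rem_filter ?iota_uniq // -size_eq0 size_rem ?modn_in_Zq //.
by rewrite size_iota -lt0n -ltnS prednK ?gq_gt1 // ltnW // gq_gt1.
Qed.

Lemma is_dist_dh_triples : is_dist (dh_triples L).
Proof.
have Zq_dist := is_dist_dunif _ (Zq_neq0 L).
by rewrite /dh_triples; do 2!apply: is_dist_dbind => // ?; apply: is_dist_dret.
Qed.

Lemma is_dist_non_dh_triples : is_dist (non_dh_triples L).
Proof.
have Zq_dist := is_dist_dunif _ (Zq_neq0 L).
rewrite /non_dh_triples; do 2!apply: is_dist_dbind => // ?.
apply: is_dist_dbind => [|?]; last exact: is_dist_dret.
exact/is_dist_dunif/non_dh_exps_neq0.
Qed.

Lemma Ex_rand_triples f :
  Ex (rand_triples L) f =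
  q%:R^-1 * Ex (dh_triples L) f + (1 - q%:R^-1) * Ex (non_dh_triples L) f.
Proof.
rewrite /rand_triples /dh_triples /non_dh_triples !Ex_dbind -!ExZ -ExD; apply: eq_Ex => a.
rewrite !Ex_dbind -!ExZ -ExD; apply: eq_Ex => b.
rewrite !Ex_dbind (Ex_dunif_rem _ _ _ (modn_in_Zq (a * b)) (iota_uniq 0 q)) size_iota.
by rewrite !Ex_dret /gexp_triple gexp_mod.
Qed.

Lemma Ex_dh_triples f : Ex (dh_triples L) f =
  Ex (dunif (Zq L)) (fun a => Ex (dunif (Zq L)) (fun b =>
  f (gexp_triple L a b (a * b)%N))).
Proof.
rewrite /dh_triples Ex_dbind; apply: eq_Ex => a.
by rewrite Ex_dbind; apply: eq_Ex => b; rewrite Ex_dret.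
Qed.

Lemma Ex_non_dh_triples f : Ex (non_dh_triples L) f =
  Ex (dunif (Zq L)) (fun a => Ex (dunif (Zq L)) (fun b =>
  Ex (dunif (non_dh_exps L a b)) (fun c => f (gexp_triple L a b c)))).
Proof.
rewrite /non_dh_triples Ex_dbind; apply: eq_Ex => a.
rewrite Ex_dbind; apply: eq_Ex => b.
by rewrite Ex_dbind; apply: eq_Ex => c; rewrite Ex_dret.
Qed.

Lemma Ex_IS_false k (F : ddhX L * ddhW L -> rat) : Ex (ddh_IS k L false) F =
  Ex (dunif (Zq L)) (fun a => Ex (dunif (Zq L)) (fun b =>
  F (gexp_triple L a b (a * b)%N, (a, b)))).
Proof.
rewrite /ddh_IS Ex_dbind; apply: eq_Ex => a.
by rewrite Ex_dbind; apply: eq_Ex => b; rewrite Ex_dret.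
Qed.

Lemma Ex_IS_true k (F : ddhX L * ddhW L -> rat) : Ex (ddh_IS k L true) F =
  Ex (dunif (Zq L)) (fun a => Ex (dunif (Zq L)) (fun b =>
  Ex (dunif (non_dh_exps L a b)) (fun c => F (gexp_triple L a b c, (a, b))))).
Proof.
rewrite /ddh_IS Ex_dbind; apply: eq_Ex => a.
rewrite Ex_dbind; apply: eq_Ex => b.
by rewrite /= Ex_dbind; apply: eq_Ex => c; rewrite Ex_dret.
Qed.

Lemma outcome_IS_real k {x w} : outcome (ddh_IS k L false) (x, w) ->
  exists a b, x = gexp_triple L a b (a * b)%N /\ w = (a, b).
Proof.
by case/outcome_dbind=> a _ /outcome_dbind[b _ /outcome_dret[-> ->]]; exists a, b.
Qed.

Lemma outcome_IS_fake k {x w} : outcome (ddh_IS k L true) (x, w) ->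
  exists a b c, [/\ x = gexp_triple L a b c, w = (a, b) & c \in non_dh_exps L a b].
Proof.
case/outcome_dbind=> a _ /outcome_dbind[b _ /outcome_dbind[c /outcome_dunif c_non_dh]].
by case/outcome_dret=> -> ->; exists a, b, c.
Qed.

Lemma Ex_KG k (al be ga : gT L) (h : gT L * gT L -> rat) :
  Ex (ddh_KG k L (al, be, ga)) h =
  Ex (dunif (Zq L)) (fun u => Ex (dunif (Zq L)) (fun v =>
    h (ga ^+ u * be ^+ v, al ^+ u * gexp L v)%g)).
Proof.
rewrite /ddh_KG !Ex_dbind; apply: eq_Ex => u.
by rewrite !Ex_dbind; apply: eq_Ex => v; rewrite Ex_dret.
Qed.

Lemma outcome_KG k {al be ga hk pk : gT L} :
  outcome (ddh_KG k L (al, be, ga)) (hk, pk) ->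
  exists u v, hk = (ga ^+ u * be ^+ v)%g /\ pk = (al ^+ u * gexp L v)%g.
Proof.
by case/outcome_dbind=> u _ /outcome_dbind[v _ /outcome_dret[-> ->]]; exists u, v.
Qed.
End DDHInstances.

Lemma ddh_projection Gen : projection_prop (ddh_hash_system Gen).
Proof.
exists 0%N => k _ L _ x w /supp_outcome/(outcome_IS_real L k)[a [b [-> ->]]] hk pk.
case/supp_outcome/(outcome_KG L k)=> u [v [-> ->]] /=; rewrite /ddh_Hash /ddh_pHash /=.
rewrite expgMn; last exact: gdesc_commute.
by rewrite !gexpX mulnAC [(b * v)%N]mulnC.
Qed.

Lemma ddh_distinguishability Gen : distinguishability_prop (ddh_hash_system Gen).
Proof.
move=> k L _ x w; split.
  by case=> k' /supp_outcome/(outcome_IS_real L k')[a [b [-> ->]]]; rewrite /= eqxx.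
case=> k' /supp_outcome/(outcome_IS_fake L k')[a [b [c [-> -> c_non_dh]]]] /=.
move: c_non_dh; rewrite mem_filter mem_iota add0n => /andP[c_ab c_q].
by rewrite eq_gexp modn_small.
Qed.

Section Smoothness.
Variable L : gdesc.
Local Notation U := (dunif (Zq L)).
Local Notation unifG := (dunif (enum (gT L))).
Local Open Scope group_scope.

Lemma Ex_KG_pk k (x : ddhX L) (h : gT L -> rat) :
  Ex (ddh_KG k L x) (fun kp => h kp.2) = Ex unifG h.
Proof.
case: x => [[al be] ga]; rewrite Ex_KG -[RHS](Ex_cst U _ (is_dist_dunif _ (Zq_neq0 L))).
apply: eq_Ex => u.
transitivity (Ex U (fun v => h (gen L ^+ v * al ^+ u))).
  by apply: eq_Ex => v /=; rewrite /gexp gdesc_commute.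
exact: (Ex_expg_uniform _ _ h (order_gen L)).
Qed.

Lemma Ex_KG_non_dh k a b c (h : gT L -> gT L -> rat) : c \in non_dh_exps L a b ->
  Ex (ddh_KG k L (gexp_triple L a b c)) (fun kp => h kp.1 kp.2) =
  Ex unifG (fun z => Ex unifG (fun y => h y z)).
Proof.
rewrite mem_filter mem_iota add0n => /andP[c_ab c_q].
set A := gexp L a; set C := gexp L c; set d := C * (A ^+ b)^-1.
have d1 : d != 1 by rewrite -eq_mulgV1 gexpX eq_gexp modn_small.
have shift u z : C ^+ u * ((A ^+ u)^-1 * z) ^+ b = d ^+ u * z ^+ b.
  by rewrite /d !(expgMn _ (gdesc_commute _ _ _)) !expVgn [A ^+ u ^+ b]expgnAC mulgA.
have inner u : Ex U (fun v => h (C ^+ u * gexp L b ^+ v) (A ^+ u * gexp L v)) =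
               Ex unifG (fun z => h (d ^+ u * z ^+ b) z).
  pose F w := h (C ^+ u * w ^+ b) (A ^+ u * w).
  transitivity (Ex U (fun v => F (gen L ^+ v * 1))).
    by apply: eq_Ex => v; rewrite mulg1 /F /gexp [gen L ^+ b ^+ v]expgnAC.
  rewrite (Ex_expg_uniform _ _ F (order_gen L)).
  rewrite -(Ex_dunif_enum_inj (fun z => (A ^+ u)^-1 * z)); last exact: mulgI.
  by apply: eq_Ex => z; rewrite /F mulKVg shift.
rewrite Ex_KG (eq_Ex _ _ _ inner) Ex_exchange; apply: eq_Ex => z.
exact: (Ex_expg_uniform _ _ (h^~ z) (order_gdesc L _ d1)).
Qed.
End Smoothness.

Lemma ddh_perfectly_smooth Gen k (P : pred (Sm_out (ddh_hash_system Gen))) :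
  Pr (Sm1 (ddh_hash_system Gen) k) P = Pr (Sm2 (ddh_hash_system Gen) k) P.
Proof.
rewrite !PrE /Sm1 /Sm2 !Ex_dbind; apply: eq_Ex => L /=.
rewrite Ex_dbind [RHS]Ex_dbind !Ex_IS_true; apply: eq_Ex => a; apply: eq_Ex => b.
apply: eq_Ex_dunif => c c_non_dh.
pose g y z := (P (existT _ L (gexp_triple L a b c, z, y)))%:R : rat.
transitivity (Ex (dunif (enum (gT L))) (fun z => Ex (dunif (enum (gT L))) (g^~ z))).
  rewrite -(Ex_KG_non_dh _ k _ _ _ g c_non_dh) Ex_dbind.
  by apply: eq_Ex => kp; rewrite Ex_dret.
rewrite -(Ex_KG_pk _ k (gexp_triple L a b c) (fun z => Ex (dunif (enum (gT L))) (g^~ z))).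
rewrite [RHS]Ex_dbind; apply: eq_Ex => kp /=.
rewrite /ddh_Hash map_id undup_id ?enum_uniq // Ex_dbind.
by apply: eq_Ex => y; rewrite Ex_dret.
Qed.

Definition ddh_in (L : gdesc) (x : ddhX L) : DDH_out :=
  existT (fun L => (gT L * gT L * gT L)%type) L x.

Lemma dlog_test_gexp_triple c k L a b x :
  dlog_test c k (ddh_in L (gexp_triple L a b x)) =
  (gq L <= k ^ c)%N && (x == a * b %[mod gq L])%N.
Proof.
rewrite /dlog_test /=; case: (gq L <= k ^ c)%N => //=.
apply/hasP/idP => [[i _ /andP[/eqP gbi /eqP gxi]] | x_ab].
  by rewrite -eq_gexp gxi gexpX mulnC -gexpX -gbi gexpX mulnC.
exists (b %% gq L)%N; first exact: modn_in_Zq.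
by rewrite gexp_mod eqxx /= gexpX eq_gexp modnMmr.
Qed.

Section HardSubsetMembership.
Variable Gen : nat -> dist gdesc.
Hypothesis Gen_dist : forall k, is_dist (Gen k).
Local Notation H := (ddh_hash_system Gen).
Implicit Types (P : pred DDH_out) (k : nat).

Lemma Pr_DDH1 k P :
  Pr (DDH1 Gen k) P =
  Ex (Gen k) (fun L => Pr (dh_triples L) (fun x => P (ddh_in L x))).
Proof.
rewrite PrE /DDH1 Ex_dbind; apply: eq_Ex => L; rewrite PrE Ex_dh_triples Ex_dbind.
by apply: eq_Ex => a; rewrite Ex_dbind; apply: eq_Ex => b; rewrite Ex_dret.
Qed.

Lemma Pr_DDH2 k P :
  Pr (DDH2 Gen k) P =
  Ex (Gen k) (fun L => Pr (rand_triples L) (fun x => P (ddh_in L x))).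
Proof.
rewrite PrE /DDH2 Ex_dbind; apply: eq_Ex => L; rewrite PrE /rand_triples !Ex_dbind.
apply: eq_Ex => a; rewrite !Ex_dbind; apply: eq_Ex => b; rewrite !Ex_dbind.
by apply: eq_Ex => c; rewrite !Ex_dret.
Qed.

Lemma Pr_Hm1 k P :
  Pr (Hm1 H k) P =
  Ex (Gen k) (fun L => Pr (dh_triples L) (fun x => P (ddh_in L x))).
Proof.
rewrite PrE /Hm1 Ex_dbind; apply: eq_Ex => L; rewrite PrE Ex_dh_triples Ex_dbind /=.
by rewrite Ex_IS_false; apply: eq_Ex => a; apply: eq_Ex => b; rewrite Ex_dret.
Qed.

Lemma Pr_Hm2 k P :
  Pr (Hm2 H k) P =
  Ex (Gen k) (fun L => Pr (non_dh_triples L) (fun x => P (ddh_in L x))).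
Proof.
rewrite PrE /Hm2 Ex_dbind; apply: eq_Ex => L; rewrite PrE Ex_non_dh_triples Ex_dbind /=.
rewrite Ex_IS_true; apply: eq_Ex => a; apply: eq_Ex => b.
by apply: eq_Ex => c; rewrite Ex_dret.
Qed.

Lemma Hm_gapE k P :
  Pr (Hm1 H k) P - Pr (Hm2 H k) P = (Pr (DDH1 Gen k) P - Pr (DDH2 Gen k) P) +
  Ex (Gen k) (fun L => (gq L)%:R^-1 *
    (Pr (dh_triples L) (fun x => P (ddh_in L x)) -
     Pr (non_dh_triples L) (fun x => P (ddh_in L x)))).
Proof.
rewrite Pr_Hm1 Pr_Hm2 Pr_DDH1 Pr_DDH2 -!ExB -ExD; apply: eq_Ex => L /=.
rewrite 3!PrE Ex_rand_triples.
by set r := Ex (dh_triples L) _; set f := Ex (non_dh_triples L) _; ring.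
Qed.

Lemma Ex_inv_order_le c k : (0 < k)%N ->
  Ex (Gen k) (fun L => (gq L)%:R^-1) <=
  Pr (Gen k) (fun L => gq L <= k ^ c)%N + (k ^ c)%:R^-1.
Proof.
move=> k_gt0; rewrite -(Ex_cst (Gen k) (k ^ c)%:R^-1 (Gen_dist k)) PrE -ExD.
apply: ler_Ex => // L; have q_gt1 := gq_gt1 L.
have q_gt0 : 0 < (gq L)%:R :> rat by rewrite ltr0n ltnW.
case: leqP => [_ | k_q] /=.
  by rewrite -[leLHS]addr0 lerD ?invr_ge0 ?ler0n // invf_le1 // ler1n ltnW.
rewrite add0r lef_pV2 ?posrE ?ltr0n ?expn_gt0 ?k_gt0 ?(ltnW q_gt1) //.
by rewrite ler_nat ltnW.
Qed.

(* The brute-force discrete-log test accepts a real DDH triple exactly when the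
   group is small, and never accepts a non-DH triple. *)
Lemma small_groups_le_dlog_gap c k :
  Pr (Gen k) (fun L => gq L <= k ^ c)%N <=
  2 * (Pr (DDH1 Gen k) (dlog_test c k) - Pr (DDH2 Gen k) (dlog_test c k)).
Proof.
rewrite Pr_DDH1 Pr_DDH2 -ExB -ExZ PrE; apply: ler_Ex => // L.
set small := (gq L <= k ^ c)%N.
have Zq_dist := is_dist_dunif _ (Zq_neq0 L).
have dh1 : Ex (dh_triples L) (fun x => (dlog_test c k (ddh_in L x))%:R) = small%:R.
  rewrite Ex_dh_triples -[RHS](Ex_cst _ _ Zq_dist); apply: eq_Ex => a.
  rewrite -[RHS](Ex_cst _ _ Zq_dist); apply: eq_Ex => b.
  by rewrite dlog_test_gexp_triple eqxx andbT.
have non_dh0 : Ex (non_dh_triples L) (fun x => (dlog_test c k (ddh_in L x))%:R) = 0.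
  rewrite Ex_non_dh_triples -[RHS](Ex_cst _ _ Zq_dist); apply: eq_Ex => a.
  rewrite -[RHS](Ex_cst _ _ Zq_dist); apply: eq_Ex => b.
  rewrite -[RHS](Ex_cst _ _ (is_dist_dunif _ (non_dh_exps_neq0 L a b))).
  apply: eq_Ex_dunif => x; rewrite mem_filter mem_iota add0n => /andP[x_ab x_q].
  by rewrite dlog_test_gexp_triple /= modn_small // (negbTE x_ab) andbF.
rewrite [Pr (dh_triples L) _]PrE [Pr (rand_triples L) _]PrE Ex_rand_triples dh1 non_dh0.
have q_inv : (gq L)%:R^-1 <= 2^-1 :> rat.
  rewrite lef_pV2 ?posrE ?ltr0n //; last exact: ltnW (gq_gt1 L).
  by rewrite (ler_nat _ 2) gq_gt1.
rewrite mulr0 addr0 -[X in X - _]mul1r -mulrBl mulrA.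
by apply: ler_peMl; [exact: ler0n | lra].
Qed.

Lemma Hm_gap_le c k P : (0 < k)%N ->
  `|Pr (Hm1 H k) P - Pr (Hm2 H k) P| <=
  `|Pr (DDH1 Gen k) P - Pr (DDH2 Gen k) P| +
  2 * `|Pr (DDH1 Gen k) (dlog_test c k) - Pr (DDH2 Gen k) (dlog_test c k)| +
  (k ^ c)%:R^-1.
Proof.
move=> k_gt0; rewrite Hm_gapE -[leRHS]addrA (le_trans (ler_normD _ _)) // lerD2l.
apply: le_trans (ler_norm_Ex _ _ (Gen_dist k)) _.
have err_le L : `|(gq L)%:R^-1 * (Pr (dh_triples L) (fun x => P (ddh_in L x)) -
                  Pr (non_dh_triples L) (fun x => P (ddh_in L x)))| <= (gq L)%:R^-1.
  rewrite normrM ger0_norm ?invr_ge0 ?ler0n // ler_piMr ?invr_ge0 ?ler0n //.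
  have /andP[r0 r1] := Pr_in01 _ (fun x => P (ddh_in L x)) (is_dist_dh_triples L).
  have /andP[f0 f1] := Pr_in01 _ (fun x => P (ddh_in L x)) (is_dist_non_dh_triples L).
  by rewrite ler_norml; apply/andP; split; lra.
apply: le_trans (ler_Ex _ _ _ (Gen_dist k) err_le) _.
apply: le_trans (Ex_inv_order_le c k k_gt0) _; rewrite lerD2r.
by apply: le_trans (small_groups_le_dlog_gap c k) _; rewrite ler_pM2l ?ler_norm.
Qed.
End HardSubsetMembership.

Lemma ddh_hard_subset_membership
    (Eff : forall T : Type, (nat -> T -> bool) -> Prop) (Gen : nat -> dist gdesc) :
  (forall c, Eff DDH_out (dlog_test c)) -> (forall k, is_dist (Gen k)) ->
  DDH_hard Eff Gen ->
  comp_indist Eff (Hm1 (ddh_hash_system Gen)) (Hm2 (ddh_hash_system Gen)).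
Proof.
move=> Eff_dlog Gen_dist hDDH D effD; apply: (negligible_of_bound 4) => c.
have [N1 DDH_D] := hDDH D effD c.
have [N2 DDH_dlog] := hDDH _ (Eff_dlog c) c.
exists (maxn 1 (maxn N1 N2)) => k; rewrite !geq_max => /and3P[k_gt0 kN1 kN2].
apply: le_trans (Hm_gap_le _ Gen_dist c k (D k) k_gt0) _.
have := DDH_D k kN1; have := DDH_dlog k kN2.
by set x := (k ^ c)%:R^-1; rewrite mulr_natl; lra.
Qed.

Theorem theorem5
  (Eff : forall T : Type, (nat -> T -> bool) -> Prop)
  (Eff_dlog_test : forall c : nat, Eff DDH_out (dlog_test c))
  (Gen : nat -> dist gdesc)
  (Gen_dist : forall k : nat, is_dist (Gen k))
  (hDDH : DDH_hard Eff Gen) :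
  SPHDH (ddh_hash_system Gen) Eff.
Proof.
split.
- exact: ddh_projection.
- exact: ddh_distinguishability.
- move=> D _ c; exists 1%N => k k_gt0.
  by rewrite ddh_perfectly_smooth subrr normr0 invr_gt0 ltr0n expn_gt0 k_gt0.
- exact: ddh_hard_subset_membership.
Qed.
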